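(* For every metric space $(X,d)$, the upper Vietoris topology and the Scott topology on $\mathsf{K}((X,d))$ coincide.
   Context: For a metric space, $\mathsf{K}(X)$ is the set of nonempty compact subsets, ordered by reverse inclusion. Scott topology on a poset: upper sets $U$ such that every directed $D$ whose supremum exists and lies in $U$ meets $U$ (a family in $\mathsf{K}(X)$ has a supremum iff its intersection lies in $\mathsf{K}(X)$, and then it is the intersection). Upper Vietoris topology: base $\Box U=\{K:K\subseteq U\}$, $U$ open. *)

From Stdlib Require Import Reals List.
Open Scope R_scope.

Record MetricSpace := {
  carrier :> Type;
  dist : carrier -> carrier -> R;
  dist_nonneg : forall x y, 0 <= dist x y;
  dist_eq0 : forall x y, dist x y = 0 <-> x = y;
  dist_sym : forall x y, dist x y = dist y x;
  dist_tri : forall x y z, dist x z <= dist x y + dist y z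
}.

Section MS.
Variable X : MetricSpace.

Definition is_open (U : X -> Prop) : Prop :=
  forall x, U x -> exists eps, 0 < eps /\ forall y, dist X x y < eps -> U y.

Definition subset (A B : X -> Prop) : Prop := forall x, A x -> B x.

Definition is_compact (K : X -> Prop) : Prop :=
  forall F : (X -> Prop) -> Prop,
    (forall V, F V -> is_open V) ->
    (forall x, K x -> exists V, F V /\ V x) ->
    exists l : list (X -> Prop),
      (forall V, In V l -> F V) /\ (forall x, K x -> exists V, In V l /\ V x).

Definition KX : Type := { K : X -> Prop | (exists x, K x) /\ is_compact K }.

Definition Kset (K : KX) : X -> Prop := proj1_sig K.

Definition Kle (K L : KX) : Prop := subset (Kset L) (Kset K).

Definition upper_set (W : KX -> Prop) : Prop :=
  forall K L, W K -> Kle K L -> W L.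

Definition directed (D : KX -> Prop) : Prop :=
  (exists K, D K) /\
  forall K L, D K -> D L -> exists M, D M /\ Kle K M /\ Kle L M.

Definition is_lub (D : KX -> Prop) (s : KX) : Prop :=
  (forall K, D K -> Kle K s) /\
  (forall t, (forall K, D K -> Kle K t) -> Kle s t).

Definition scott_open (W : KX -> Prop) : Prop :=
  upper_set W /\
  forall D, directed D -> forall s, is_lub D s -> W s -> exists K, D K /\ W K.

(** Upper Vietoris topology: generated by the base  Box U = {K | K ⊆ U}, U open;
    its open sets are the unions of basic sets. *)
Definition box (U : X -> Prop) : KX -> Prop := fun K => subset (Kset K) U.

Definition upper_vietoris_open (W : KX -> Prop) : Prop :=
  forall K, W K -> exists U, is_open U /\ box U K /\ (forall L, box U L -> W L).

End MS.

(* A directed family with meet inside an open U has a member inside U: cover one member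
   by U and the complements of the others.  Conversely, if a compact K in a Scott open W
   had no neighbourhood Box U inside W, pick compacts L_n outside W within distance
   1/(n+1) of K; the sets K ∪ L_n ∪ L_(n+1) ∪ ... are compact, decrease, and meet in K,
   so one of them lies in W, and then so does L_n since W is an upper set. *)
From Pilot Require Import Defs.
From Stdlib Require Import Reals List Lra Lia Classical ClassicalEpsilon.
Open Scope R_scope.

Lemma inv_succ_pos (n : nat) : 0 < / (INR n + 1).
Proof. pose proof (pos_INR n); apply Rinv_0_lt_compat; lra. Qed.

Lemma inv_succ_antitone (n m : nat) : (n <= m)%nat -> / (INR m + 1) <= / (INR n + 1).
Proof.
  intros Hnm; apply le_INR in Hnm; pose proof (pos_INR n).
  apply Rinv_le_contravar; lra.
Qed.

Lemma exists_inv_succ_lt (e : R) : 0 < e -> exists N : nat, / (INR N + 1) < e.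
Proof.
  intros He; destruct (archimed_cor1 e He) as [N [HN HN0]].
  exists N; apply lt_INR in HN0; simpl in HN0.
  apply Rle_lt_trans with (/ INR N); [apply Rinv_le_contravar|]; lra.
Qed.

Lemma exists_pos_below_list {A : Type} (Q : A -> R -> Prop) (l : list A) :
  (forall a r r', 0 < r' <= r -> Q a r -> Q a r') ->
  (forall a, In a l -> exists r, 0 < r /\ Q a r) ->
  exists r, 0 < r /\ forall a, In a l -> Q a r.
Proof.
  intros Hmono; induction l as [|a l IH]; intros Hl.
  - exists 1; split; [lra | intros a []].
  - destruct (Hl a (or_introl eq_refl)) as [r1 [Hr1 Q1]].
    destruct IH as [r2 [Hr2 Q2]]; [intros b Hb; apply Hl; right; exact Hb|].
    assert (Hm : 0 < Rmin r1 r2) by (apply Rmin_glb_lt; assumption).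
    exists (Rmin r1 r2); split; [exact Hm|].
    intros b [<- | Hb].
    + apply (Hmono a r1); [split; [exact Hm | apply Rmin_l] | exact Q1].
    + apply (Hmono b r2); [split; [exact Hm | apply Rmin_r] | apply Q2; exact Hb].
Qed.

Lemma list_reindex {A B : Type} (P : A -> B -> Prop) (l : list A) :
  (forall a, In a l -> exists b, P a b) ->
  exists l' : list B, (forall b, In b l' -> exists a, In a l /\ P a b) /\
                      (forall a, In a l -> exists b, In b l' /\ P a b).
Proof.
  induction l as [|a l IH]; intros Hl.
  - exists nil; split; [intros b [] | intros a []].
  - destruct (Hl a (or_introl eq_refl)) as [b Hab].
    destruct IH as [l' [H1 H2]]; [intros a' Ha'; apply Hl; right; exact Ha'|].
    exists (b :: l'); split.
    + intros b' [<- | Hb']; [exists a; split; [left |]; auto|].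
      destruct (H1 b' Hb') as [a' [Ha' Hab']]; exists a'; split; [right |]; auto.
    + intros a' [<- | Ha']; [exists b; split; [left |]; auto|].
      destruct (H2 a' Ha') as [b' [Hb' Hab']]; exists b'; split; [right |]; auto.
Qed.

Section MetricCompactness.
Variable X : MetricSpace.
Local Notation d := (Defs.dist X).

Definition nbhd (K : X -> Prop) (r : R) : X -> Prop :=
  fun y => exists k, K k /\ d k y < r.

Lemma nbhd_open K r : is_open X (nbhd K r).
Proof.
  intros y [k [Hk Hky]]; exists (r - d k y); split; [lra|].
  intros z Hz; exists k; split; [exact Hk|].
  pose proof (Defs.dist_tri X k y z); lra.
Qed.

Lemma nbhd_self K r x : 0 < r -> K x -> nbhd K r x.
Proof.
  intros Hr Hx; exists x; split; [exact Hx|].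
  rewrite (proj2 (Defs.dist_eq0 X x x) eq_refl); exact Hr.
Qed.

Lemma nbhd_mono K r r' : r <= r' -> subset X (nbhd K r) (nbhd K r').
Proof. intros Hr y [k [Hk Hky]]; exists k; split; [exact Hk | lra]. Qed.

Lemma compact_ext (A B : X -> Prop) :
  (forall x, A x <-> B x) -> is_compact X A -> is_compact X B.
Proof.
  intros HAB HA F HF Hc.
  destruct (HA F HF (fun x Hx => Hc x (proj1 (HAB x) Hx))) as [l [HlF Hl]].
  exists l; split; [exact HlF | intros x Hx; apply Hl, HAB, Hx].
Qed.

Lemma compact_union (A B : X -> Prop) :
  is_compact X A -> is_compact X B -> is_compact X (fun x => A x \/ B x).
Proof.
  intros HA HB F HF Hc.
  destruct (HA F HF (fun x Hx => Hc x (or_introl Hx))) as [lA [HlAF HlA]].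
  destruct (HB F HF (fun x Hx => Hc x (or_intror Hx))) as [lB [HlBF HlB]].
  exists (lA ++ lB); split.
  - intros V HV; apply in_app_or in HV; destruct HV; auto.
  - intros x [Hx | Hx].
    + destruct (HlA x Hx) as [V [HV HVx]]; exists V; split; [apply in_or_app|]; auto.
    + destruct (HlB x Hx) as [V [HV HVx]]; exists V; split; [apply in_or_app|]; auto.
Qed.

Lemma compact_union_lt (L : nat -> X -> Prop) (N : nat) :
  (forall m, (m < N)%nat -> is_compact X (L m)) ->
  is_compact X (fun x => exists m, (m < N)%nat /\ L m x).
Proof.
  induction N as [|N IH]; intros HL.
  - intros F _ _; exists nil; split; [intros V [] | intros x [m [Hm _]]; lia].
  - apply compact_ext with
      (fun x => (exists m, (m < N)%nat /\ L m x) \/ L N x).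
    + intros x; split.
      * intros [[m [Hm Hx]] | Hx]; [exists m | exists N]; split; auto; lia.
      * intros [m [Hm Hx]]; destruct (Nat.eq_dec m N) as [-> | Hne]; [right; exact Hx|].
        left; exists m; split; [lia | exact Hx].
    + apply compact_union; [apply IH; intros m Hm|]; apply HL; lia.
Qed.

Lemma compact_indexed_subcover (K : X -> Prop) (I : Type) (P : I -> Prop)
    (V : I -> X -> Prop) :
  is_compact X K -> (forall i, P i -> is_open X (V i)) ->
  (forall x, K x -> exists i, P i /\ V i x) ->
  exists l, (forall i, In i l -> P i) /\ (forall x, K x -> exists i, In i l /\ V i x).
Proof.
  intros HK HV Hc.
  destruct (HK (fun U => exists i, P i /\ U = V i)) as [ls [HlsF Hls]].
  - intros U [i [Hi ->]]; apply HV, Hi.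
  - intros x Hx; destruct (Hc x Hx) as [i [Hi Hix]]; exists (V i); split; [exists i|]; auto.
  - destruct (list_reindex (fun U i => P i /\ U = V i) ls HlsF) as [l [Hl1 Hl2]].
    exists l; split.
    + intros i Hi; destruct (Hl1 i Hi) as [U [_ [HPi _]]]; exact HPi.
    + intros x Hx; destruct (Hls x Hx) as [U [HU HUx]].
      destruct (Hl2 U HU) as [i [Hi [_ ->]]]; exists i; auto.
Qed.

Lemma compact_compl_open (K : X -> Prop) : is_compact X K -> is_open X (fun y => ~ K y).
Proof.
  intros HK x Hx.
  destruct (compact_indexed_subcover K R (fun r => 0 < r) (fun r y => r < d x y) HK)
    as [l [Hlpos Hl]].
  - intros r Hr z Hz; exists (d x z - r); split; [lra|].
    intros y Hy; pose proof (Defs.dist_tri X x y z); pose proof (Defs.dist_sym X y z); lra.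
  - intros y Hy; exists (d x y / 2).
    assert (Hxy : d x y <> 0) by (intros E; apply Defs.dist_eq0 in E; subst; contradiction).
    pose proof (Defs.dist_nonneg X x y); split; lra.
  - destruct (exists_pos_below_list (fun r e => e <= r) l) as [e [He Hle]].
    + intros r e e' He' Her; lra.
    + intros r Hr; exists r; split; [apply Hlpos, Hr | lra].
    + exists e; split; [exact He|].
      intros y Hy HKy; destruct (Hl y HKy) as [r [Hr Hry]].
      specialize (Hle r Hr); lra.
Qed.

Lemma compact_nbhd_closed (K : X -> Prop) (x : X) :
  is_compact X K -> (forall e, 0 < e -> nbhd K e x) -> K x.
Proof.
  intros HK Hx; apply NNPP; intros HKx.
  destruct (compact_compl_open K HK x HKx) as [e [He Hball]].
  destruct (Hx e He) as [k [Hk Hkx]].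
  apply (Hball k); [rewrite Defs.dist_sym; exact Hkx | exact Hk].
Qed.

(* Cover [K] by balls whose doubles lie in [V]; the smallest radius is a Lebesgue number. *)
Lemma compact_open_nbhd (K V : X -> Prop) :
  is_compact X K -> is_open X V -> subset X K V ->
  exists e, 0 < e /\ subset X (nbhd K e) V.
Proof.
  intros HK HV HKV.
  destruct (compact_indexed_subcover K (X * R)
              (fun p => 0 < snd p /\ forall z, d (fst p) z < 2 * snd p -> V z)
              (fun p => nbhd (fun k => k = fst p) (snd p)) HK) as [l [HlP Hl]].
  - intros p _; apply nbhd_open.
  - intros k Hk; destruct (HV k (HKV k Hk)) as [e [He Hball]].
    exists (k, e / 2); simpl; split.
    + split; [lra | intros z Hz; apply Hball; lra].
    + apply nbhd_self; [lra | reflexivity].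
  - destruct (exists_pos_below_list (fun p e => e <= snd p) l) as [e [He Hle]].
    + intros p r r' Hr' Hr; lra.
    + intros p Hp; exists (snd p); split; [apply (HlP p Hp) | lra].
    + exists e; split; [exact He|].
      intros y [k [Hk Hky]]; destruct (Hl k Hk) as [p [Hp [k' [-> Hk'k]]]].
      destruct (HlP p Hp) as [_ Hdouble]; specialize (Hle p Hp).
      apply Hdouble; pose proof (Defs.dist_tri X (fst p) k y); lra.
Qed.

(* Only finitely many [L m] leave a Lebesgue neighbourhood of a finite subcover of [K]. *)
Lemma compact_union_converging (K : X -> Prop) (L : nat -> X -> Prop) :
  is_compact X K -> (forall m, is_compact X (L m)) ->
  (forall e, 0 < e -> exists N, forall m, (N <= m)%nat -> subset X (L m) (nbhd K e)) ->
  is_compact X (fun x => K x \/ exists m, L m x).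
Proof.
  intros HK HL Hconv F HF Hc.
  destruct (HK F HF (fun x Hx => Hc x (or_introl Hx))) as [l0 [Hl0F Hl0]].
  set (V0 := fun y => exists V, In V l0 /\ V y).
  assert (HV0 : is_open X V0).
  { intros y [V [HVl HVy]]; destruct (HF V (Hl0F V HVl) y HVy) as [e [He Hball]].
    exists e; split; [exact He | intros z Hz; exists V; auto]. }
  destruct (compact_open_nbhd K V0 HK HV0 Hl0) as [e [He HeV0]].
  destruct (Hconv e He) as [N HN].
  assert (HA : is_compact X (fun x => K x \/ exists m, (m < N)%nat /\ L m x)).
  { apply compact_union; [exact HK | apply compact_union_lt; auto]. }
  destruct (HA F HF) as [l1 [Hl1F Hl1]].
  { intros x [Hx | [m [_ Hx]]]; apply Hc; [left | right; exists m]; exact Hx. }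
  exists (l0 ++ l1); split.
  - intros V HV; apply in_app_or in HV; destruct HV; auto.
  - intros x Hx.
    assert (Hcases : (K x \/ exists m, (m < N)%nat /\ L m x) \/ V0 x).
    { destruct Hx as [Hx | [m Hm]]; [left; left; exact Hx|].
      destruct (Compare_dec.lt_dec m N) as [Hlt | Hge]; [left; right; exists m; auto|].
      right; apply HeV0, (HN m); [lia | exact Hm]. }
    destruct Hcases as [HAx | [V [HV HVx]]].
    + destruct (Hl1 x HAx) as [V [HV HVx]]; exists V; split; [apply in_or_app|]; auto.
    + exists V; split; [apply in_or_app|]; auto.
Qed.

End MetricCompactness.

Section UpperVietorisScott.
Variable X : MetricSpace.

Lemma point_compact (x : X) : is_compact X (fun y => y = x).
Proof.
  intros F _ Hc; destruct (Hc x eq_refl) as [V [HFV HVx]].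
  exists (V :: nil); split.
  - intros V' [<- | []]; exact HFV.
  - intros y ->; exists V; split; [left |]; auto.
Qed.

Definition Kpoint (x : X) : KX X :=
  exist _ (fun y => y = x) (conj (ex_intro _ x eq_refl) (point_compact x)).

Lemma is_lub_meet (D : KX X -> Prop) (s : KX X) (x : X) :
  Defs.is_lub X D s -> (forall K, D K -> Kset X K x) -> Kset X s x.
Proof.
  intros [_ Hleast] Hx; apply (Hleast (Kpoint x)); [|reflexivity].
  intros K HK y Hy; simpl in Hy; subst y; apply Hx, HK.
Qed.

Lemma directed_bound_list (D : KX X -> Prop) (K0 : KX X) (l : list (KX X)) :
  directed X D -> D K0 -> (forall K, In K l -> D K) ->
  exists M, D M /\ Kle X K0 M /\ forall K, In K l -> Kle X K M.
Proof.
  intros [_ Hdir] HK0; induction l as [|K l IH]; intros Hl.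
  - exists K0; split; [exact HK0 | split; [intros x Hx; exact Hx | intros K []]].
  - destruct IH as [M [HM [HK0M HlM]]]; [intros K' HK'; apply Hl; right; exact HK'|].
    destruct (Hdir M K HM (Hl K (or_introl eq_refl))) as [M' [HM' [HMM' HKM']]].
    exists M'; split; [exact HM'|]; split.
    + intros x Hx; apply HK0M, HMM', Hx.
    + intros K' [<- | HK'] x Hx; [apply HKM', Hx | apply (HlM K' HK'), HMM', Hx].
Qed.

Lemma directed_meet_box (D : KX X -> Prop) (U : X -> Prop) :
  directed X D -> is_open X U -> (forall x, (forall K, D K -> Kset X K x) -> U x) ->
  exists M, D M /\ box X U M.
Proof.
  intros HD HU Hmeet; destruct (proj1 HD) as [K0 HK0].
  destruct (compact_indexed_subcover X (Kset X K0) (option (KX X))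
              (fun i => match i with Some K => D K | None => True end)
              (fun i => match i with Some K => fun y => ~ Kset X K y | None => U end)
              (proj2 (proj2_sig K0))) as [l [HlD Hl]].
  - intros [K|] _; [apply compact_compl_open, (proj2 (proj2_sig K)) | exact HU].
  - intros x _; destruct (classic (U x)) as [HUx | HUx]; [exists None; auto|].
    destruct (not_all_ex_not _ _ (fun H => HUx (Hmeet x H))) as [K HK].
    apply imply_to_and in HK; exists (Some K); exact HK.
  - set (pick := fun i => match i with Some K => K | None => K0 end).
    destruct (directed_bound_list D K0 (map pick l) HD HK0) as [M [HM [HK0M HlM]]].
    { intros K HK; apply in_map_iff in HK; destruct HK as [[K'|] [<- Hi]];
        [exact (HlD _ Hi) | exact HK0]. }
    exists M; split; [exact HM|].
    intros x Hx; destruct (Hl x (HK0M x Hx)) as [[K|] [Hi HKx]]; [|exact HKx].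
    exfalso; apply HKx, (HlM K); [apply in_map_iff; exists (Some K); auto | exact Hx].
Qed.

Lemma upper_vietoris_scott_open (W : KX X -> Prop) :
  upper_vietoris_open X W -> scott_open X W.
Proof.
  intros HW; split.
  - intros K L HK HKL; destruct (HW K HK) as [U [_ [HKU HUW]]].
    apply HUW; intros x Hx; apply HKU, HKL, Hx.
  - intros D HD s Hs HWs; destruct (HW s HWs) as [U [HU [HsU HUW]]].
    destruct (directed_meet_box D U HD HU) as [M [HM HMU]].
    { intros x Hx; apply HsU, (is_lub_meet D s x Hs Hx). }
    exists M; split; [exact HM | apply HUW, HMU].
Qed.

Lemma scott_open_chain (W : KX X -> Prop) (M : nat -> KX X) (K : KX X) :
  scott_open X W -> (forall n m, (n <= m)%nat -> Kle X (M n) (M m)) ->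
  (forall n, Kle X (M n) K) -> (forall x, (forall n, Kset X (M n) x) -> Kset X K x) ->
  W K -> exists n, W (M n).
Proof.
  intros [_ HW] Hmono Hbound Hmeet HK.
  destruct (HW (fun A => exists n, A = M n)) with K as [A [[n ->] HA]].
  - split; [exists (M 0%nat), 0%nat; reflexivity|].
    intros A B [a ->] [b ->]; exists (M (max a b)); split; [exists (max a b); reflexivity|].
    split; apply Hmono; lia.
  - split; [intros A [n ->]; apply Hbound|].
    intros t Ht x Hx; apply Hmeet; intros n; apply (Ht (M n)); [exists n |]; auto.
  - exact HK.
  - exists n; exact HA.
Qed.

Section Tails.
Variables (K : KX X) (L : nat -> KX X).
Hypothesis L_near : forall m, box X (nbhd X (Kset X K) (/ (INR m + 1))) (L m).

Definition tail_set (n : nat) : X -> Prop :=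
  fun x => Kset X K x \/ exists m, (n <= m)%nat /\ Kset X (L m) x.

Lemma tail_set_compact (n : nat) : is_compact X (tail_set n).
Proof.
  apply compact_ext with (fun x => Kset X K x \/ exists m, Kset X (L (n + m)%nat) x).
  { intros x; split; intros [Hx | [m Hm]]; try (left; exact Hx); right.
    - exists (n + m)%nat; split; [lia | exact Hm].
    - destruct Hm as [Hnm Hm]; exists (m - n)%nat.
      replace (n + (m - n))%nat with m by lia; exact Hm. }
  apply compact_union_converging;
    [exact (proj2 (proj2_sig K)) | intros m; exact (proj2 (proj2_sig (L (n + m)%nat))) |].
  intros e He; destruct (exists_inv_succ_lt e He) as [N HN]; exists N.
  intros m Hm x Hx; apply (nbhd_mono X _ (/ (INR (n + m) + 1))), L_near, Hx.
  pose proof (inv_succ_antitone N (n + m) ltac:(lia)); lra.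
Qed.

Lemma tail_set_inhabited (n : nat) : exists x, tail_set n x.
Proof. destruct (proj1 (proj2_sig K)) as [x Hx]; exists x; left; exact Hx. Qed.

Definition tail (n : nat) : KX X :=
  exist _ (tail_set n) (conj (tail_set_inhabited n) (tail_set_compact n)).

Lemma tail_antitone (n m : nat) : (n <= m)%nat -> Kle X (tail n) (tail m).
Proof.
  intros Hnm x [Hx | [k [Hk Hx]]]; [left; exact Hx | right; exists k; split; [lia | exact Hx]].
Qed.

Lemma tail_meet (x : X) : (forall n, Kset X (tail n) x) -> Kset X K x.
Proof.
  intros Hx; apply (compact_nbhd_closed X _ x (proj2 (proj2_sig K))).
  intros e He; destruct (exists_inv_succ_lt e He) as [N HN].
  destruct (Hx N) as [HKx | [m [Hm HLx]]]; [apply nbhd_self; assumption|].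
  apply (nbhd_mono X _ (/ (INR m + 1))), L_near, HLx.
  pose proof (inv_succ_antitone N m Hm); lra.
Qed.

End Tails.

Lemma scott_open_upper_vietoris (W : KX X -> Prop) :
  scott_open X W -> upper_vietoris_open X W.
Proof.
  intros HW K HK; apply NNPP; intros Hno.
  assert (Hbad : forall n : nat, exists L,
             box X (nbhd X (Kset X K) (/ (INR n + 1))) L /\ ~ W L).
  { intros n; apply not_all_not_ex; intros Hn; apply Hno.
    exists (nbhd X (Kset X K) (/ (INR n + 1))); split; [apply nbhd_open|split].
    - intros x Hx; apply nbhd_self; [apply inv_succ_pos | exact Hx].
    - intros L HL; apply NNPP; intros HWL; apply (Hn L); split; assumption. }
  destruct (choice _ Hbad) as [L HL].
  assert (L_near : forall m, box X (nbhd X (Kset X K) (/ (INR m + 1))) (L m))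
    by (intros m; apply HL).
  destruct (scott_open_chain W (tail K L L_near) K HW) as [n HWn].
  - apply tail_antitone.
  - intros n x Hx; left; exact Hx.
  - apply tail_meet.
  - exact HK.
  - apply (proj2 (HL n)), (proj1 HW (tail K L L_near n)); [exact HWn|].
    intros x Hx; right; exists n; split; [lia | exact Hx].
Qed.

End UpperVietorisScott.

Theorem mainTheorem14 (X : MetricSpace) (W : KX X -> Prop) :
  upper_vietoris_open X W <-> scott_open X W.
Proof.
  split; [apply upper_vietoris_scott_open | apply scott_open_upper_vietoris].
Qed.
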